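(* Let $n\ge 3$, $c\ge 1$, and let $\upsilon: UV_n(c)\to\mathrm{GL}_n(\mathbb{C})$ be the representation \[ \upsilon(\rho_i)=\mathrm{diag}\Big(I_{i-1},\begin{pmatrix}0&r_2\\ \frac1{r_2}&0\end{pmatrix},I_{n-i-1}\Big),\qquad \upsilon(\sigma_{i,t})=\mathrm{diag}\Big(I_{i-1},\begin{pmatrix}s_{1,t}&s_{2,t}\\ s_{3,t}&s_{4,t}\end{pmatrix},I_{n-i-1}\Big) \] ($1\le i\le n-1$, $1\le t\le c$) with $r_2\neq0$ and $s_{1,t}s_{4,t}-s_{2,t}s_{3,t}\ne 0$. Then $\upsilon$ is equivalent to a representation $\upsilon'$ of the form \[ \upsilon'(\rho_i)=\mathrm{diag}\Big(I_{i-1},\begin{pmatrix}0&1\\ 1&0\end{pmatrix},I_{n-i-1}\Big),\qquad \upsilon'(\sigma_{i,t})=\mathrm{diag}\Big(I_{i-1},\begin{pmatrix}s'_{1,t}&s'_{2,t}\\ s'_{3,t}&s'_{4,t}\end{pmatrix},I_{n-i-1}\Big) \] for all $1\le i\le n-1$, $1\le t\le c$, with complex numbers $s'_{j,t}$ satisfying $s'_{1,t}s'_{4,t}-s'_{2,t}s'_{3,t}\neq 0$.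
   Context: $UV_n(c)$ is the group with generators $\rho_i$ ($1\le i\le n-1$), $\sigma_{i,t}$ ($1\le i\le n-1$, $1\le t\le c$) and relations $\rho_i\rho_{i+1}\rho_i=\rho_{i+1}\rho_i\rho_{i+1}$, $\rho_i\rho_j=\rho_j\rho_i$ ($|i-j|\ge2$), $\rho_i^2=1$, $\sigma_{i,t}\sigma_{j,\ell}=\sigma_{j,\ell}\sigma_{i,t}$ ($|i-j|\ge2$), $\sigma_{i,t}\rho_j=\rho_j\sigma_{i,t}$ ($|i-j|\ge2$), $\rho_i\rho_{i+1}\sigma_{i,t}=\sigma_{i+1,t}\rho_i\rho_{i+1}$ ($1\le i\le n-2$). $\mathrm{diag}(\cdot,\cdot,\cdot)$ denotes a block diagonal matrix and $I_r$ the $r\times r$ identity. Two representations are equivalent if they are conjugate by a fixed invertible matrix. *)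

(* The complex numbers are modelled as R[i] = complex R
   for R : realType (the reals of MathComp-Analysis). *)
From HB Require Import structures.
From mathcomp Require Import all_boot all_order all_algebra.
From mathcomp Require Export complex.
From mathcomp Require Export reals.
Set Implicit Arguments. Unset Strict Implicit. Unset Printing Implicit Defensive.
Import Order.TTheory GRing.Theory Num.Theory.

(* blk n i a b c d = diag(I_{i-1}, [[a, b], [c, d]], I_{n-i-1}) for (1 <= i <= n-1
   (indices 1-based as in the paper; matrix rows/cols are 0-based, so the
   2x2 block occupies rows/cols i-1 and i). *)
Definition blk (F : nzRingType) (n i : nat) (a b c d : F) : 'M[F]_n :=
  \matrix_(p < n, q < n)
    if (p == i.-1 :> nat) && (q == i.-1 :> nat) then a
    else if (p == i.-1 :> nat) && (q == i :> nat) then b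
    else if (p == i :> nat) && (q == i.-1 :> nat) then c
    else if (p == i :> nat) && (q == i :> nat) then d
    else ((p == q)%:R)%R.

(* The assignment rho_i |-> rho i, sigma_{i,t} |-> sigma i t
   ((1 <= i <= n-1, (1 <= t <= c) respects the defining relations of UV_n(c),
   i.e. it defines a representation UV_n(c) -> GL_n.  (Invertibility of the
   images is a separate hypothesis.) *)
Local Open Scope ring_scope.
Definition UV_relations (F : nzRingType) (n c : nat)
  (rho : nat -> 'M[F]_n) (sigma : nat -> nat -> 'M[F]_n) : Prop :=
  (forall i, (1 <= i)%N -> (i.+1 <= n.-1)%N ->
         rho i *m rho i.+1 *m rho i = rho i.+1 *m rho i *m rho i.+1) /\
  [/\       (forall i j, (1 <= i <= n.-1)%N -> (1 <= j <= n.-1)%N -> ((i + 2 <= j) || (j + 2 <= i))%N ->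
         rho i *m rho j = rho j *m rho i),
      (forall i, (1 <= i <= n.-1)%N -> rho i *m rho i = 1%:M%R),
      (forall i j t l, (1 <= i <= n.-1)%N -> (1 <= j <= n.-1)%N -> (1 <= t <= c)%N -> (1 <= l <= c)%N ->
         ((i + 2 <= j) || (j + 2 <= i))%N -> sigma i t *m sigma j l = sigma j l *m sigma i t),
      (forall i j t, (1 <= i <= n.-1)%N -> (1 <= j <= n.-1)%N -> (1 <= t <= c)%N ->
         ((i + 2 <= j) || (j + 2 <= i))%N -> sigma i t *m rho j = rho j *m sigma i t)
    & (forall i t, (1 <= i)%N -> (i.+1 <= n.-1)%N -> (1 <= t <= c)%N ->
         rho i *m rho i.+1 *m sigma i t = sigma i.+1 t *m rho i *m rho i.+1)].

(* Conjugating by D = diag(1, r, r^2, ..., r^(n-1)) fixes the diagonal and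
   rescales the entry (k, k+1) by r^-1 and the entry (k+1, k) by r.  With
   r = r2 it turns every upsilon(rho_i) into the plain transposition block and
   every sigma-block [[s1, s2], [s3, s4]] into [[s1, s2/r2], [s3 r2, s4]],
   whose determinant is unchanged. *)
From HB Require Import structures.
From mathcomp Require Import all_boot all_order all_algebra.
From mathcomp Require Import complex reals.
From mathcomp Require Import ring.
Set Implicit Arguments. Unset Strict Implicit. Unset Printing Implicit Defensive.
Import Order.TTheory GRing.Theory Num.Theory.
Local Open Scope ring_scope.

Section PowerDiagonal.
Variable R : comUnitRingType.

Definition power_diag_mx (n : nat) (r : R) : 'M[R]_n :=
  diag_mx (\row_(k < n) r ^+ k).

Lemma power_diag_mx_unit (n : nat) (r : R) :
  r \is a GRing.unit -> power_diag_mx n r \in unitmx.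
Proof.
move=> r_unit; rewrite unitmxE det_diag; apply: unitr_prod => k _.
by rewrite mxE unitrX.
Qed.

Lemma power_diag_mx_blk (n i : nat) (r a b c d : R) :
  r \is a GRing.unit -> (1 <= i)%N ->
  power_diag_mx n r *m blk n i a b c d
  = blk n i a (b / r) (c * r) d *m power_diag_mx n r.
Proof.
move=> r_unit i_gt0; apply/matrixP => p q.
rewrite mul_diag_mx mul_mx_diag !mxE.
have expr_i : r ^+ i = r ^+ i.-1 * r by rewrite -exprSr prednK.
case: ifP => [/andP[/eqP -> /eqP ->]|_]; first by rewrite mulrC.
case: ifP => [/andP[/eqP -> /eqP ->]|_].
  by rewrite expr_i mulrA mulrAC mulrVK // mulrC.
case: ifP => [/andP[/eqP -> /eqP ->]|_]; first by rewrite expr_i; ring.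
case: ifP => [/andP[/eqP -> /eqP ->]|_]; first by rewrite mulrC.
by case: eqP => [->|]; rewrite ?mulr0 ?mul0r // mulrC.
Qed.

End PowerDiagonal.

Lemma conj_intertwined (R : comUnitRingType) (n : nat) (P B B' : 'M[R]_n) :
  P \in unitmx -> P *m B = B' *m P -> P *m B *m invmx P = B'.
Proof. by move=> P_unit ->; rewrite mulmxK. Qed.

Theorem lemma3p2 (R : realType) (n c : nat) (r2 : R[i])
    (s1 s2 s3 s4 : nat -> R[i]) :
  (3 <= n)%N -> (1 <= c)%N ->
  r2 != 0 ->
  (forall t, (1 <= t <= c)%N -> s1 t * s4 t - s2 t * s3 t != 0) ->
  UV_relations c (fun i => blk n i 0 r2 r2^-1 0)
                 (fun i t => blk n i (s1 t) (s2 t) (s3 t) (s4 t)) ->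
  exists (P : 'M[R[i]]_n) (s1' s2' s3' s4' : nat -> R[i]),
    [/\ P \in unitmx,
        (forall t, (1 <= t <= c)%N -> s1' t * s4' t - s2' t * s3' t != 0),
        (forall i, (1 <= i <= n.-1)%N ->
           P *m blk n i 0 r2 r2^-1 0 *m invmx P = blk n i 0 1 1 0)
      & (forall i t, (1 <= i <= n.-1)%N -> (1 <= t <= c)%N ->
           P *m blk n i (s1 t) (s2 t) (s3 t) (s4 t) *m invmx P
           = blk n i (s1' t) (s2' t) (s3' t) (s4' t))].
Proof.
move=> _ _ r2_neq0 det_neq0 _.
have r2_unit : r2 \is a GRing.unit by rewrite unitfE.
have D_unit : power_diag_mx n r2 \in unitmx by exact: power_diag_mx_unit.
exists (power_diag_mx n r2), s1, (fun t => s2 t / r2), (fun t => s3 t * r2), s4.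
split=> [//|t t_range|i /andP[i_gt0 _]|i t /andP[i_gt0 _] _].
- by rewrite mulrACA mulVf // mulr1; apply: det_neq0.
- by apply: conj_intertwined D_unit _; rewrite power_diag_mx_blk // divff // mulVf.
- by apply: conj_intertwined D_unit _; rewrite power_diag_mx_blk.
Qed.
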